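(* Let $T\colon \mathbb{N}\to\mathbb{N}$ be given by $T(n)=n/2$ for even $n$ and $T(n)=(3n+1)/2$ for odd $n$, with $k$-th iterate $T^{(k)}$. For each positive integer $k$ and each $r\in\{0,\ldots,2^k-1\}$ let $C_{k,r}\in\mathbb{Q}[X]$ denote the unique polynomial of degree at most one with $C_{k,r}(n)=T^{(k)}(n)$ for all positive integers $n\equiv r\pmod{2^k}$. Then for all positive integers $k,l$ and every $r\in\{0,\ldots,2^{k+l}-1\}$, writing $r'=r \bmod 2^l$ and $s=C_{l,r'}(r)\bmod 2^k$, one has the polynomial identity $$C_{k+l,r}(X)=C_{k,s}\bigl(C_{l,r'}(X)\bigr).$$
   Context: Here $a \bmod m$ denotes the least nonnegative residue of $a$ modulo $m$; note $C_{l,r'}(r)=T^{(l)}(r)$ is an integer (for $r=0$ interpret via the polynomial value, which is $0$). *)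

From mathcomp Require Import all_boot all_order all_algebra.
Set Implicit Arguments. Unset Strict Implicit. Unset Printing Implicit Defensive.
Import Order.TTheory GRing.Theory Num.Theory.
Local Open Scope ring_scope.

Definition T (n : nat) : nat :=
  if odd n then ((3 * n + 1)./2)%N else n./2.

(* C k r is "the" polynomial C_{k,r}: degree at most one (size <= 2) and
   C_{k,r}(n) = T^(k)(n) for every positive n = r mod 2^k.  A family C
   satisfies this specification on all k > 0, r < 2^k. *)
Definition Cspec (C : nat -> nat -> {poly rat}) : Prop :=
  forall (k r : nat), (0 < k)%N -> (r < 2 ^ k)%N ->
    (size (C k r) <= 2)%N /\
    forall n : nat, (0 < n)%N -> n = r %[mod 2 ^ k] ->
      (C k r).[n%:R] = (iter k T n)%:R.

(* Least nonnegative residue of the rational value C_{l,r'}(r) modulo 2^k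
   (that value is an integer; floor is the identity on it). *)
Definition resid (x : rat) (k : nat) : nat :=
  absz (Num.floor x %% (2 ^ k)%:Z)%Z.

From mathcomp Require Import all_boot all_order all_algebra.
Import Order.TTheory GRing.Theory Num.Theory.
From mathcomp Require Import zify.

(* Adding [2 ^ j * m] to [n] adds [A * m] to [T^(j)(n)], where the factor [A]
   is [3] to the number of odd values among [n, T n, ..., T^(j-1)(n)]. Hence
   [C_{k,r}] is the affine map with slope [A / 2 ^ k] through [(r, T^(k)(r))];
   it is determined by its values, so [C_{l,r'}(r) = T^(l)(r)] and
   [s = T^(l)(r) mod 2 ^ k]. Both sides of the identity are then affine and
   take the value [T^(k+l)(n)] at the two points [n = r] and [n = r + 2^(k+l)],
   because [T^(l)(n) mod 2^k] only depends on [n mod 2^(k+l)]. *)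

Lemma T_add_double n m : T (n + 2 * m) = (T n + 3 ^ odd n * m)%N.
Proof.
rewrite /T oddD mul2n odd_double addbF; case: (odd n).
  have -> : (3 * (n + m.*2) + 1 = (3 * n + 1) + (3 * m).*2)%N by lia.
  by rewrite halfD odd_double andbF doubleK expn1.
by rewrite halfD odd_double andbF doubleK expn0 mul1n.
Qed.

Fixpoint Tslope (j n : nat) : nat :=
  if j is j'.+1 then (Tslope j' (T n) * 3 ^ odd n)%N else 1%N.

Lemma iterT_add_pow2 j n m :
  iter j T (n + 2 ^ j * m) = (iter j T n + Tslope j n * m)%N.
Proof.
elim: j n m => [|j IHj] n m; first by rewrite expn0 !mul1n.
by rewrite !iterSr expnS -mulnA T_add_double mulnCA IHj /= mulnA.
Qed.

Lemma iterT_mod k l n :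
  iter l T n = iter l T (n %% 2 ^ (k + l)) %[mod 2 ^ k].
Proof.
rewrite {1}(divn_eq n (2 ^ (k + l))) addnC.
rewrite [X in (_ + X)%N](_ : _ = 2 ^ l * (2 ^ k * (n %/ 2 ^ (k + l))))%N.
  by rewrite iterT_add_pow2 mulnCA addnC mulnC modnMDl.
by rewrite expnD mulnC (mulnC (2 ^ k)) mulnA.
Qed.

Section AffinePolynomials.

Variable R : idomainType.
Implicit Types p q : {poly R}.

Lemma size_comp_poly2 p q :
  (size p <= 2)%N -> (size q <= 2)%N -> (size (p \Po q)%R <= 2)%N.
Proof.
move=> sp sq; apply: leq_trans (size_comp_poly_leq p q) _.
rewrite ltnS; nia.
Qed.

Lemma size2_poly_eq p q x y : (size p <= 2)%N -> (size q <= 2)%N -> x != y ->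
  (p.[x] = q.[x] -> p.[y] = q.[y] -> p = q)%R.
Proof.
move=> sp sq neq_xy px py; apply/eqP; rewrite -subr_eq0; apply/negPn/negP => pq.
have := max_poly_roots pq (rs := [:: x; y]).
rewrite /= /root !hornerD !hornerN px py !subrr eqxx inE neq_xy => /(_ isT isT).
by apply/negP; rewrite -leqNgt (leq_trans (size_polyD _ _)) // size_polyN geq_max sp sq.
Qed.

End AffinePolynomials.

Local Open Scope ring_scope.

Definition Cpoly (k r : nat) : {poly rat} :=
  (iter k T r)%:R%:P + ((Tslope k r)%:R / (2 ^ k)%:R) *: ('X - r%:R%:P).

Lemma size_Cpoly k r : (size (Cpoly k r) <= 2)%N.
Proof.
rewrite (leq_trans (size_polyD _ _)) // geq_max (leq_trans (size_polyC_leq1 _)) //.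
by rewrite (leq_trans (size_scale_leq _ _)) // size_XsubC.
Qed.

Lemma horner_Cpoly k r n : (r < 2 ^ k)%N -> n = r %[mod 2 ^ k] ->
  (Cpoly k r).[n%:R] = (iter k T n)%:R.
Proof.
move=> r_lt e; have -> : n = (r + 2 ^ k * (n %/ 2 ^ k))%N.
  by rewrite {1}(divn_eq n (2 ^ k)) e modn_small // addnC mulnC.
rewrite iterT_add_pow2 /Cpoly hornerD hornerC hornerZ hornerXsubC.
by rewrite !natrD addrAC subrr add0r !natrM mulrA divfK // pnatr_eq0 expn_eq0.
Qed.

Lemma Cpoly_spec : Cspec Cpoly.
Proof.
by move=> k r _ r_lt; split=> [|n _]; [exact: size_Cpoly | exact: horner_Cpoly].
Qed.

Lemma Cspec_Cpoly [C k r] : Cspec C -> (0 < k)%N -> (r < 2 ^ k)%N ->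
  C k r = Cpoly k r.
Proof.
move=> HC k_gt0 r_lt; have [sC evalC] := HC k r k_gt0 r_lt.
have eval m : (C k r).[(r + 2 ^ k * m.+1)%N%:R]
    = (Cpoly k r).[(r + 2 ^ k * m.+1)%N%:R].
  have e : (r + 2 ^ k * m.+1 = r %[mod 2 ^ k])%N by rewrite addnC mulnC modnMDl.
  by rewrite evalC ?horner_Cpoly // addn_gt0 muln_gt0 expn_gt0 orbT.
apply: size2_poly_eq sC (size_Cpoly k r) _ (eval 0%N) (eval 1%N).
by rewrite eqr_nat eqn_add2l eqn_pmul2l ?expn_gt0.
Qed.

Lemma Cpoly_comp k l r : (r < 2 ^ (k + l))%N ->
  Cpoly (k + l) r = Cpoly k (iter l T r %% 2 ^ k) \Po Cpoly l (r %% 2 ^ l).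
Proof.
move=> r_lt; have eval n : n = r %[mod 2 ^ (k + l)] ->
    (Cpoly (k + l) r).[n%:R]
    = (Cpoly k (iter l T r %% 2 ^ k) \Po Cpoly l (r %% 2 ^ l)).[n%:R].
  move=> e; have dvd_l : (2 ^ l %| 2 ^ (k + l))%N by rewrite dvdn_exp2l ?leq_addl.
  have n_mod_l : n = r %% 2 ^ l %[mod 2 ^ l].
    by rewrite modn_mod -(modn_dvdm n dvd_l) e modn_dvdm.
  have Tn_mod_k : iter l T n = iter l T r %% 2 ^ k %[mod 2 ^ k].
    by rewrite modn_mod iterT_mod e -iterT_mod.
  by rewrite horner_comp !horner_Cpoly ?ltn_pmod ?expn_gt0 // -iterD.
apply: size2_poly_eq (size_Cpoly _ _) _ _ (eval r erefl) (eval (r + 2 ^ (k + l))%N _).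
- exact: size_comp_poly2 (size_Cpoly _ _) (size_Cpoly _ _).
- by rewrite eqr_nat -{1}[r]addn0 eqn_add2l eq_sym expn_eq0.
- by rewrite modnDr.
Qed.

Lemma resid_nat n k : resid n%:R k = (n %% 2 ^ k)%N.
Proof. by rewrite /resid pmulrn intrKfloor modz_nat. Qed.

Theorem mainTheorem2 :
  (exists C : nat -> nat -> {poly rat}, Cspec C) /\
  forall C : nat -> nat -> {poly rat}, Cspec C ->
  forall (k l r : nat), (0 < k)%N -> (0 < l)%N -> (r < 2 ^ (k + l))%N ->
    let r' := (r %% 2 ^ l)%N in
    let s := resid (C l r').[r%:R] k in
    C (k + l)%N r = (C k s) \Po (C l r').
Proof.
split=> [|C HC k l r k_gt0 l_gt0 r_lt r' s]; first by exists Cpoly; exact: Cpoly_spec.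
have r'_lt : (r' < 2 ^ l)%N by rewrite ltn_pmod ?expn_gt0.
rewrite /s (Cspec_Cpoly HC l_gt0 r'_lt) horner_Cpoly ?modn_mod // resid_nat.
rewrite !(Cspec_Cpoly HC) ?addn_gt0 ?k_gt0 ?ltn_pmod ?expn_gt0 //.
exact: Cpoly_comp.
Qed.
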